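(* With the notation of the context, let $\bm c\in\mathbb{R}^e$ and let $\bm p=(\rho,\sigma,t_\rho,t_\sigma)$ be a profile. There exists a sequence compatible with $\bm p$ that satisfies the equality constraints for $\bm c$ if and only if there are vectors $\bm a,\bm d_c,\bm d_\infty\in\mathbb{R}^d$ with $\bm d_c\neq\bm 0$ such that, for all $i\in\{1,\dots,n\}$ and $j\in\{1,\dots,m\}$: (1) $\bm r_i^\top\bm a=\rho(i)$ and $\bm r_i^\top\bm d_\infty=0$ whenever $t_\rho(i)\in\{-1,1\}$; $\bm s_i^\top\bm a=\sigma(i)$ and $\bm s_i^\top\bm d_\infty=0$ whenever $t_\sigma(i)\in\{-1,1\}$; (2) $\bm r_i^\top\bm a=\rho(i)$, $\bm r_i^\top\bm d_c=0$, $\bm r_i^\top\bm d_\infty=0$ whenever $t_\rho(i)=0$; $\bm s_i^\top\bm a=\sigma(i)$, $\bm s_i^\top\bm d_c=0$, $\bm s_i^\top\bm d_\infty=0$ whenever $t_\sigma(i)=0$; (3) $\bm r_i^\top\bm d_c>0$ (resp. $<0$) whenever $t_\rho(i)=1$ (resp. $-1$); $\bm s_i^\top\bm d_c>0$ (resp. $<0$) whenever $t_\sigma(i)=1$ (resp. $-1$); (4) $\bm r_i^\top\bm d_\infty>0$ (resp. $<0$) whenever $t_\rho(i)=\omega$ (resp. $-\omega$); $\bm s_i^\top\bm d_\infty>0$ (resp. $<0$) whenever $t_\sigma(i)=\omega$ (resp. $-\omega$); (5) $\bm u_j^\top\bm d_c=\bm u_j^\top\bm d_\infty=0$, $\bm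 v_j^\top\bm d_c=\bm v_j^\top\bm d_\infty=0$, and $(\bm u_j-\bm v_j)^\top\bm a=\bm w_j^\top\bm c+d_j$.
   Context: Fixed data: $\bm r_i,\bm s_i\in\mathbb{Q}^d$, $\bm t_i\in\mathbb{Q}^e$, $h_i\in\mathbb{Q}$ for $i\in[1,n]$ and $\bm u_j,\bm v_j\in\mathbb{Q}^d$, $\bm w_j\in\mathbb{Q}^e$, $d_j\in\mathbb{Q}$ for $j\in[1,m]$. A profile is a tuple $\bm p=(\rho,\sigma,t_\rho,t_\sigma)$ of functions $\rho,\sigma\colon\{1,\dots,n\}\to\mathbb{R}\cup\{-\omega,\omega\}$ and $t_\rho,t_\sigma\colon\{1,\dots,n\}\to\{-\omega,-1,0,1,\omega\}$. For a sequence $(\bm a_k)_{k\ge1}$ in $\mathbb{R}^d$ let $\bm\rho_i=(\bm r_i^\top\bm a_k)_{k\ge1}$ and $\bm\sigma_i=(\bm s_i^\top\bm a_k)_{k\ge1}$. A sequence of pairwise distinct vectors is compatible with $\bm p$ if for every $i$ the following hold for $\bm\rho_i$ w.r.t. $(\rho(i),t_\rho(i))$ and for $\bm\sigma_i$ w.r.t. $(\sigma(i),t_\sigma(i))$: type $0$: constantly equal to the value; type $1$ (resp. $-1$): strictly increasing (resp. strictly decreasing) converging from below (resp. above) to the real value; type $\omega$ (resp. $-\omega$): strictly increasing diverging to $\infty$ (resp. strictly decreasing diverging to $-\infty$), with value $\omega$ (resp. $-\omega$). A sequence $(\bm a_k)$ satisfies the equality constraints for $\bm c$ if $\bm u_j^\top\bm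 a_k=\bm v_j^\top\bm a_\ell+\bm w_j^\top\bm c+d_j$ for all $j$ and all $k<\ell$. *)

From HB Require Import structures.
From mathcomp Require Import all_boot all_order all_algebra.
From mathcomp Require Import all_classical all_reals all_analysis.
Set Implicit Arguments. Unset Strict Implicit. Unset Printing Implicit Defensive.
Import Order.TTheory GRing.Theory Num.Theory.
Import numFieldNormedType.Exports.
Local Open Scope classical_set_scope.
Local Open Scope ring_scope.

Inductive ptype : Type := TNegOmega | TNeg | TZero | TPos | TPosOmega.

Definition qdot (R : realType) (dim : nat) (r : 'rV[rat]_dim) (a : 'rV[R]_dim) : R :=
  \sum_(k < dim) ratr (r 0 k) * a 0 k.

(* A real sequence x behaves according to (value v, type t);
   values in R u {-omega, omega} are modelled by extended reals \bar R. *)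
Definition seq_behaves (R : realType) (x : nat -> R) (v : \bar R) (t : ptype) : Prop :=
  match t with
  | TZero => exists c : R, v = c%:E /\ (forall k, x k = c)
  | TPos => exists c : R, v = c%:E /\ (forall k, x k < x k.+1) /\ (x @ \oo --> c)
  | TNeg => exists c : R, v = c%:E /\ (forall k, x k.+1 < x k) /\ (x @ \oo --> c)
  | TPosOmega => v = +oo%E /\ (forall k, x k < x k.+1) /\ (x @ \oo --> +oo)
  | TNegOmega => v = -oo%E /\ (forall k, x k.+1 < x k) /\ (x @ \oo --> -oo)
  end.

(* A sequence (a_k) (indexed from 0 instead of 1) of pairwise distinct vectors
   is compatible with the profile (rho, sigma, t_rho, t_sigma). *)
Definition compatible (R : realType) (d n : nat)
  (r s : 'I_n -> 'rV[rat]_d)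
  (rho sigma : 'I_n -> \bar R) (trho tsigma : 'I_n -> ptype)
  (a : nat -> 'rV[R]_d) : Prop :=
  injective a /\
  forall i : 'I_n,
    seq_behaves (fun k => qdot (r i) (a k)) (rho i) (trho i) /\
    seq_behaves (fun k => qdot (s i) (a k)) (sigma i) (tsigma i).

Definition eq_constraints (R : realType) (d e m : nat)
  (u v : 'I_m -> 'rV[rat]_d) (w : 'I_m -> 'rV[rat]_e) (dd : 'I_m -> rat)
  (c : 'rV[R]_e) (a : nat -> 'rV[R]_d) : Prop :=
  forall (j : 'I_m) (k l : nat), (k < l)%N ->
    qdot (u j) (a k) = qdot (v j) (a l) + qdot (w j) c + ratr (dd j).

Definition profile_wf (R : realType) (n : nat)
  (rho : 'I_n -> \bar R) (t : 'I_n -> ptype) : Prop :=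
  forall i, (t i = TPosOmega -> rho i = +oo%E) /\ (t i = TNegOmega -> rho i = -oo%E).

From mathcomp Require Import all_boot all_order all_algebra.
From mathcomp Require Import all_classical all_reals all_analysis.
From mathcomp Require Import ring lra.
Set Implicit Arguments. Unset Strict Implicit. Unset Printing Implicit Defensive.
Import Order.TTheory Order.NatMonotonyTheory GRing.Theory Num.Theory.
Import numFieldNormedType.Exports.
Local Open Scope classical_set_scope.
Local Open Scope ring_scope.

(* Forward: along a compatible sequence every functional r_i, s_i, u_j, v_j has a
   limit in R u {-oo, +oo}.  Split A_k = w_k + z_k with z_k in the common kernel of
   the functionals with finite limit and w_k a linear function of their values.  The
   image of a linear map is closed, so w_k converges to a point a realizing the
   finite limits; for large k, z_k is a direction d_inf on which
   the divergent functionals have the sign of their limit.  Strict monotonicity and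
   the equality constraints make d_c = A_2 - A_1 work.
   Backward: take A_k = a - l/(k+1) d_c + k d_inf.  Each functional converges
   monotonically along d_c or diverges along d_inf; choosing l so small that
   l |g(d_c)| < |g(d_inf)| whenever g(d_inf) <> 0 keeps the monotonicity strict. *)

Section QdotLinear.
Variables (R : realType) (d : nat).
Implicit Types (g : 'rV[rat]_d) (x y : 'rV[R]_d).

Lemma qdotE g x : qdot g x = (x *m (map_mx ratr g)^T) 0 0.
Proof. by rewrite mxE; apply: eq_bigr => k _; rewrite !mxE mulrC. Qed.

Lemma qdotBl g1 g2 x : qdot (g1 - g2) x = qdot g1 x - qdot g2 x.
Proof.
rewrite /qdot -sumrB; apply: eq_bigr => k _.
by rewrite !mxE rmorphB /= mulrBl.
Qed.

Lemma qdotDr g x y : qdot g (x + y) = qdot g x + qdot g y.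
Proof. by rewrite !qdotE mulmxDl mxE. Qed.

Lemma qdotBr g x y : qdot g (x - y) = qdot g x - qdot g y.
Proof. by rewrite !qdotE mulmxBl !mxE. Qed.

Lemma qdotZr g (c : R) x : qdot g (c *: x) = c * qdot g x.
Proof. by rewrite !qdotE -scalemxAl !mxE. Qed.

Lemma qdot_delta (j : 'I_d) x : qdot (delta_mx 0 j) x = x 0 j.
Proof.
rewrite /qdot (bigD1 j) //= big1 => [|k /negbTE kj].
  by rewrite mxE !eqxx rmorph1 mul1r addr0.
by rewrite mxE kj andbF rmorph0 mul0r.
Qed.

End QdotLinear.

Section EntrywiseLimits.
Variables (R : realType) (p : nat) (x : nat -> 'rV[R]_p) (X : 'rV[R]_p).
Hypothesis cvg_x : forall l, (fun k => x k 0 l) @ \oo --> X 0 l.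

Lemma cvg_mulmx_entry q (A : 'M[R]_(p, q)) l :
  (fun k => (x k *m A) 0 l) @ \oo --> (X *m A) 0 l.
Proof.
rewrite mxE; under eq_fun do rewrite mxE.
apply: cvg_big => // [|j _]; first exact: add_continuous.
exact: cvgMr_tmp.
Qed.

Lemma cvg_qdot (g : 'rV[rat]_p) : (fun k => qdot g (x k)) @ \oo --> qdot g X.
Proof. rewrite qdotE; under eq_fun do rewrite qdotE; exact: cvg_mulmx_entry. Qed.

End EntrywiseLimits.

Lemma cvgry_near_gt (R : realType) (u w : nat -> R) (l : R) :
  u @ \oo --> +oo -> w @ \oo --> l -> \forall k \near \oo, w k < u k.
Proof.
move=> /cvgry_gt ul /cvgr_lt wl; near=> k.
have : l + 1 < u k by near: k; exact: ul.
have : w k < l + 1 by near: k; apply: wl; lra.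
lra.
Unshelve. all: end_near. Qed.

Lemma cvgrNy_near_lt (R : realType) (u w : nat -> R) (l : R) :
  u @ \oo --> -oo -> w @ \oo --> l -> \forall k \near \oo, u k < w k.
Proof.
move=> /cvgrNy_lt ul /cvgr_gt wl; near=> k.
have : u k < l - 1 by near: k; exact: ul.
have : l - 1 < w k by near: k; apply: wl; lra.
lra.
Unshelve. all: end_near. Qed.

Section LimitDirections.
Variables (R : realType) (d : nat).

Definition ray_to (L : \bar R) (al q : R) : Prop :=
  [/\ L \is a fin_num -> al%:E = L /\ q = 0, L = +oo%E -> 0 < q & L = -oo%E -> q < 0].

Lemma cvg_split_kernel (I : finType) (f : I -> 'rV[rat]_d) (y : I -> R)
    (x : nat -> 'rV[R]_d) :
  (forall i, (fun k => qdot (f i) (x k)) @ \oo --> y i) ->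
  exists (a : 'rV[R]_d) (z : nat -> 'rV[R]_d),
    [/\ forall i, qdot (f i) a = y i, forall i k, qdot (f i) (z k) = 0 &
        forall g, (fun k => qdot g (x k - z k)) @ \oo --> qdot g a].
Proof.
move=> cvg_f.
pose M : 'M[R]_(d, #|I|) := \matrix_(k, c) ratr (f (enum_val c) 0 k).
have qdot_M v i : qdot (f i) v = (v *m M) 0 (enum_rank i).
  by rewrite mxE; apply: eq_bigr => k _; rewrite mxE enum_rankK mulrC.
pose Y : 'rV[R]_#|I| := \row_c y (enum_val c).
have cvg_xM c : (fun k => (x k *m M) 0 c) @ \oo --> Y 0 c.
  have -> : (fun k => (x k *m M) 0 c) = (fun k => qdot (f (enum_val c)) (x k)).
    by apply/funext => k; rewrite qdot_M enum_valK.
  by rewrite mxE; exact: cvg_f.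
(* The image of [*m M] is closed: [cokermx M] kills every [x k *m M], hence [Y]. *)
have Y_in_M : (Y <= M)%MS.
  rewrite submxE; apply/eqP/rowP => l; rewrite [RHS]mxE.
  apply: norm_cvg_unique (cvg_mulmx_entry cvg_xM (A := cokermx M) (l := l)) _.
  rewrite /=; under eq_fun do rewrite -mulmxA mulmx_coker mulmx0 mxE.
  exact: cvg_cst.
exists (Y *m pinvmx M), (fun k => x k - x k *m M *m pinvmx M); split.
- by move=> i; rewrite qdot_M mulmxKpV // mxE enum_rankK.
- by move=> i k; rewrite qdot_M mulmxBl mulmxKpV ?submxMl // subrr mxE.
- move=> g; under eq_fun do rewrite subKr.
  exact/cvg_qdot/cvg_mulmx_entry.
Qed.

Lemma limit_directions (I : finType) (f : I -> 'rV[rat]_d) (L : I -> \bar R)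
    (x : nat -> 'rV[R]_d) :
  (forall i, (fun k => (qdot (f i) (x k))%:E) @ \oo --> L i) ->
  exists a z : 'rV[R]_d, forall i, ray_to (L i) (qdot (f i) a) (qdot (f i) z).
Proof.
move=> cvgL.
pose J := {i : I | L i \is a fin_num}.
have cvgJ (j : J) : (fun k => qdot (f (val j)) (x k)) @ \oo --> fine (L (val j)).
  by have := cvgL (val j); rewrite -(fineK (valP j)) => /fine_cvg.
have [a [z [fa fz cvg_xz]]] := cvg_split_kernel cvgJ.
have qdot_z i k : qdot (f i) (z k) = qdot (f i) (x k) - qdot (f i) (x k - z k).
  by rewrite qdotBr opprB addrC subrK.
have eventually_dirs : \forall k \near \oo, forall i,
    (L i = +oo%E -> 0 < qdot (f i) (z k)) /\ (L i = -oo%E -> qdot (f i) (z k) < 0).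
  apply: filter_forall => i; case Li: (L i) => [r||].
  - exact: nearW.
  - have /cvgeryP xy : (fun k => (qdot (f i) (x k))%:E) @ \oo --> +oo%E by rewrite -Li.
    move: (cvgry_near_gt xy (cvg_xz (f i))); apply: filterS => k xz.
    by split=> // _; rewrite qdot_z subr_gt0.
  - have /cvgerNyP xNy : (fun k => (qdot (f i) (x k))%:E) @ \oo --> -oo%E by rewrite -Li.
    move: (cvgrNy_near_lt xNy (cvg_xz (f i))); apply: filterS => k xz.
    by split=> // _; rewrite qdot_z subr_lt0.
have [K dirsK] := filter_ex eventually_dirs.
exists a, (z K) => i; have [dir_y dir_Ny] := dirsK i; split=> // Li.
by have := fa (exist _ i Li); have := fz (exist _ i Li) K => /= -> ->; rewrite fineK.
Qed.

End LimitDirections.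

Section ProfileConditions.
Variable R : realType.
Implicit Types (v : \bar R) (t : ptype) (al p q : R).

Definition profile_cond v t al p q : Prop :=
  match t with
  | TNegOmega => q < 0
  | TNeg => al%:E = v /\ p < 0 /\ q = 0
  | TZero => al%:E = v /\ p = 0 /\ q = 0
  | TPos => al%:E = v /\ 0 < p /\ q = 0
  | TPosOmega => 0 < q
  end.

Lemma profile_condP v t al p q :
  profile_cond v t al p q <->
  ((t = TNeg \/ t = TPos) -> al%:E = v /\ q = 0) /\
  (t = TZero -> al%:E = v /\ p = 0 /\ q = 0) /\
  (t = TPos -> 0 < p) /\ (t = TNeg -> p < 0) /\
  (t = TPosOmega -> 0 < q) /\ (t = TNegOmega -> q < 0).
Proof. by case: t => /=; intuition. Qed.

Lemma profile_cond2P v1 t1 al1 p1 q1 v2 t2 al2 p2 q2 :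
  profile_cond v1 t1 al1 p1 q1 /\ profile_cond v2 t2 al2 p2 q2 <->
  ((t1 = TNeg \/ t1 = TPos) -> al1%:E = v1 /\ q1 = 0) /\
  ((t2 = TNeg \/ t2 = TPos) -> al2%:E = v2 /\ q2 = 0) /\
  (t1 = TZero -> al1%:E = v1 /\ p1 = 0 /\ q1 = 0) /\
  (t2 = TZero -> al2%:E = v2 /\ p2 = 0 /\ q2 = 0) /\
  (t1 = TPos -> 0 < p1) /\ (t1 = TNeg -> p1 < 0) /\
  (t2 = TPos -> 0 < p2) /\ (t2 = TNeg -> p2 < 0) /\
  (t1 = TPosOmega -> 0 < q1) /\ (t1 = TNegOmega -> q1 < 0) /\
  (t2 = TPosOmega -> 0 < q2) /\ (t2 = TNegOmega -> q2 < 0).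
Proof. rewrite !profile_condP; tauto. Qed.

Lemma seq_behaves_cvg (x : nat -> R) v t :
  seq_behaves x v t -> (fun k => (x k)%:E) @ \oo --> v.
Proof.
case: t => /=.
- by move=> [-> [_ /cvgerNyP]].
- by move=> [c [-> [_ xc]]]; apply: cvg_EFin => //; exact: nearW.
- by move=> [c [-> xc]]; under eq_fun do rewrite xc; exact: cvg_cst.
- by move=> [c [-> [_ xc]]]; apply: cvg_EFin => //; exact: nearW.
- by move=> [-> [_ /cvgeryP]].
Qed.

Lemma seq_behaves_profile_cond (x : nat -> R) v t al q :
  seq_behaves x v t -> ray_to v al q -> profile_cond v t al (x 2 - x 1) q.
Proof.
case: t => /=.
- by move=> [-> _] [_ _ /(_ erefl)].
- move=> [c [-> [x_decr _]]] [/(_ isT) [-> ->] _ _].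
  by rewrite subr_lt0 x_decr.
- by move=> [c [-> xc]] [/(_ isT) [-> ->] _ _]; rewrite !xc subrr.
- move=> [c [-> [x_incr _]]] [/(_ isT) [-> ->] _ _].
  by rewrite subr_gt0 x_incr.
- by move=> [-> _] [_ /(_ erefl) ? _].
Qed.

End ProfileConditions.

Lemma exists_small_scale (R : realType) (I : finType) (p q : I -> R) :
  exists2 l : R, 0 < l & forall i, q i != 0 -> l * `|p i| < `|q i|.
Proof.
pose S := \sum_i `|p i| / `|q i|.
have S_ge0 : 0 <= S by apply: sumr_ge0 => i _; rewrite divr_ge0.
exists (1 + S)^-1 => [|i qi0]; first by rewrite invr_gt0 ltr_wpDr.
have qi_gt0 : 0 < `|q i| by rewrite normr_gt0.
have : `|p i| / `|q i| <= S.
  by rewrite /S (bigD1 i) //= lerDl sumr_ge0 // => j _; rewrite divr_ge0.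
rewrite ler_pdivrMr // => pS.
rewrite mulrC ltr_pdivrMr ?ltr_wpDr //.
nra.
Qed.

Section Trajectory.
Variables (R : realType) (l : R).
Hypothesis l_gt0 : 0 < l.

Definition traj (al p q : R) (k : nat) : R := al - l * harmonic k * p + k%:R * q.

Lemma harmonic_gt0 k : 0 < harmonic k :> R.
Proof. by rewrite /= invr_gt0. Qed.

Lemma harmonic_le1 k : harmonic k <= 1 :> R.
Proof. by rewrite /= invf_le1 // ler1n. Qed.

Lemma harmonic_decr k : harmonic k.+1 < harmonic k :> R.
Proof. by rewrite /= ltf_pV2 ?posrE // ltr_nat. Qed.

Lemma trajN al p q k : traj al p q k = - traj (- al) (- p) (- q) k.
Proof. by rewrite /traj; ring. Qed.

Lemma traj_incr al p q : (q = 0 /\ 0 < p) \/ (0 < q /\ l * `|p| < q) ->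
  forall k, traj al p q k < traj al p q k.+1.
Proof.
move=> pq k; rewrite -subr_gt0.
have -> : traj al p q k.+1 - traj al p q k = l * (harmonic k - harmonic k.+1) * p + q.
  by rewrite /traj -addn1 natrD; ring.
have := harmonic_decr k; have := harmonic_gt0 k.+1; have := harmonic_le1 k.
set h0 := harmonic k; set h1 := harmonic k.+1 => h0_le1 h1_gt0 h10.
case: pq => [[-> p_gt0] | [q_gt0 lpq]]; first by rewrite addr0 !mulr_gt0 // subr_gt0.
have p_ge : 0 <= p + `|p| by rewrite -lerBlDr sub0r lerNl ler_normr lexx orbT.
have : 0 <= l * (h0 - h1) * (p + `|p|) by rewrite !mulr_ge0 // ?subr_ge0 ltW.
have : 0 <= l * (1 - (h0 - h1)) * `|p| by rewrite !mulr_ge0 // ?subr_ge0 ltW //; lra.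
lra.
Qed.

Lemma traj_decr al p q : (q = 0 /\ p < 0) \/ (q < 0 /\ l * `|p| < - q) ->
  forall k, traj al p q k.+1 < traj al p q k.
Proof.
move=> pq k; rewrite !(trajN al) ltrN2; apply: traj_incr.
case: pq => [[-> p_lt0]|[q_lt0 lpq]]; [left|right].
- by rewrite oppr0 oppr_gt0.
- by rewrite normrN oppr_gt0.
Qed.

Lemma traj_cvg al p : traj al p 0 @ \oo --> al.
Proof.
have -> : traj al p 0 = fun k => al - l * p * harmonic k.
  by apply/funext => k; rewrite /traj mulr0 addr0 mulrAC.
rewrite -[X in _ --> X]subr0 -(mulr0 (l * p)).
by apply: cvgB; [exact: cvg_cst | exact: cvgMl_tmp cvg_harmonic].
Qed.

Lemma traj_cvgy al p q : 0 < q -> traj al p q @ \oo --> +oo.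
Proof.
move=> q_gt0; apply/cvgryPge => A.
move: (@cvgr_idn R) => /cvgryPge/(_ ((A - al + l * `|p|) / q)).
apply: filterS => k; rewrite ler_pdivrMr // /traj.
have := harmonic_le1 k; have := harmonic_gt0 k.
set h := harmonic k => h_gt0 h_le1.
have : 0 <= l * h * (`|p| - p) by rewrite !mulr_ge0 ?subr_ge0 ?ler_norm // ltW.
have : 0 <= l * (1 - h) * `|p| by rewrite !mulr_ge0 ?subr_ge0 // ltW.
lra.
Qed.

Lemma traj_cvgNy al p q : q < 0 -> traj al p q @ \oo --> -oo.
Proof.
move=> q_lt0; have -> : traj al p q = - traj (- al) (- p) (- q).
  by apply/funext => k; rewrite /= trajN.
by apply/cvgNrNy/traj_cvgy; rewrite oppr_gt0.
Qed.

Section Scaled.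
Variables al p q : R.
Hypothesis small : q != 0 -> l * `|p| < `|q|.

Lemma traj_incr_cvgy : 0 < q -> forall k, traj al p q k < traj al p q k.+1.
Proof.
move=> q_gt0; apply: traj_incr; right; split=> //.
by rewrite -(gtr0_norm q_gt0) small // gt_eqF.
Qed.

Lemma traj_decr_cvgNy : q < 0 -> forall k, traj al p q k.+1 < traj al p q k.
Proof.
move=> q_lt0; apply: traj_decr; right; split=> //.
by rewrite -(ltr0_norm q_lt0) small // lt_eqF.
Qed.

Lemma traj_behaves v t :
  (t = TPosOmega -> v = +oo%E) /\ (t = TNegOmega -> v = -oo%E) ->
  profile_cond v t al p q -> seq_behaves (traj al p q) v t.
Proof.
case: t => /= [[_ ->] // q_lt0 | _ [<- [p_lt0 q0]] | _ [<- [p0 q0]] |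
                _ [<- [p_gt0 q0]] | [-> //] _ q_gt0]; rewrite ?q0.
- by split=> //; split; [exact: traj_decr_cvgNy | exact: traj_cvgNy].
- by exists al; split=> //; split; [apply: traj_decr; left | exact: traj_cvg].
- by exists al; split=> // k; rewrite /traj p0 !mulr0 subr0 addr0.
- by exists al; split=> //; split; [apply: traj_incr; left | exact: traj_cvg].
- by split=> //; split; [exact: traj_incr_cvgy | exact: traj_cvgy].
Qed.

Lemma traj_inj : p != 0 -> injective (traj al p q).
Proof.
move=> p0; case: (ltrgtP q 0) => [q_lt0 | q_gt0 | q0].
- exact/dec_inj/le_nmono/nhomo_ltn_lt/traj_decr_cvgNy.
- exact/inc_inj/le_mono/homo_ltn_lt/traj_incr_cvgy.
- rewrite q0; case: (ltrgtP p 0) p0 => // [p_lt0 | p_gt0] _.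
  + by apply/dec_inj/le_nmono/nhomo_ltn_lt/traj_decr; left.
  + by apply/inc_inj/le_mono/homo_ltn_lt/traj_incr; left.
Qed.

End Scaled.

End Trajectory.

Section Characterization.
Variables (R : realType) (d e n m : nat).
Variables (r s : 'I_n -> 'rV[rat]_d) (u v : 'I_m -> 'rV[rat]_d).
Variables (w : 'I_m -> 'rV[rat]_e) (dd : 'I_m -> rat) (c : 'rV[R]_e).
Variables (rho sigma : 'I_n -> \bar R) (trho tsigma : 'I_n -> ptype).

Definition direction_certificate (a dc dinf : 'rV[R]_d) : Prop :=
  [/\ dc != 0,
      forall i,
        profile_cond (rho i) (trho i) (qdot (r i) a) (qdot (r i) dc) (qdot (r i) dinf) /\
        profile_cond (sigma i) (tsigma i) (qdot (s i) a) (qdot (s i) dc) (qdot (s i) dinf) &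
      forall j,
       qdot (u j) dc = 0 /\ qdot (u j) dinf = 0 /\
       qdot (v j) dc = 0 /\ qdot (v j) dinf = 0 /\
       qdot (u j - v j) a = qdot (w j) c + ratr (dd j)].

Lemma certificate_of_sequence (A : nat -> 'rV[R]_d) :
  compatible r s rho sigma trho tsigma A -> eq_constraints u v w dd c A ->
  exists a dc dinf, direction_certificate a dc dinf.
Proof.
move=> [A_inj A_behaves] A_eq.
have u_const j k : qdot (u j) (A k) = qdot (u j) (A 0).
  by rewrite (A_eq j k k.+1) // (A_eq j 0 k.+1).
have v_const j k : qdot (v j) (A k.+1) = qdot (v j) (A 1).
  apply: (addIr (qdot (w j) c + ratr (dd j))).
  by rewrite !addrA -(A_eq j 0) // -(A_eq j 0).
pose F (i : ('I_n + 'I_n) + ('I_m + 'I_m)) := match i with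
  | inl (inl i) => r i | inl (inr i) => s i | inr (inl j) => u j | inr (inr j) => v j end.
pose L (i : ('I_n + 'I_n) + ('I_m + 'I_m)) := match i with
  | inl (inl i) => rho i | inl (inr i) => sigma i
  | inr (inl j) => (qdot (u j) (A 0))%:E | inr (inr j) => (qdot (v j) (A 1))%:E end.
have cvgL i : (fun k => (qdot (F i) (A k))%:E) @ \oo --> L i.
  case: i => [[i|i]|[j|j]] /=.
  - exact: seq_behaves_cvg (A_behaves i).1.
  - exact: seq_behaves_cvg (A_behaves i).2.
  - by under eq_fun do rewrite u_const; exact: cvg_cst.
  - by apply: cvg_near_cst; exists 1%N => // -[|k] //= _; rewrite v_const.
have [a [dinf ray]] := limit_directions cvgL.
(* [A 1 - A 0] would not do: [qdot (v j) (A 0)] is unconstrained. *)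
exists a, (A 2 - A 1), dinf; split.
- by rewrite subr_eq0; apply/eqP => /A_inj.
- move=> i; rewrite !qdotBr; split.
  + exact: seq_behaves_profile_cond (A_behaves i).1 (ray (inl (inl i))).
  + exact: seq_behaves_profile_cond (A_behaves i).2 (ray (inl (inr i))).
- move=> j; have [/(_ isT) [[ua] uz] _ _] := ray (inr (inl j)).
  have [/(_ isT) [[va] vz] _ _] := ray (inr (inr j)).
  rewrite /= in ua uz va vz.
  rewrite !qdotBr qdotBl (u_const _ 2) (u_const _ 1) (v_const _ 1) ua va uz vz.
  rewrite !subrr.
  by do !split; rewrite (A_eq j 0 1) //; ring.
Qed.

Hypotheses (wf_rho : profile_wf rho trho) (wf_sigma : profile_wf sigma tsigma).

Lemma sequence_of_certificate (a dc dinf : 'rV[R]_d) :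
  direction_certificate a dc dinf ->
  exists A, compatible r s rho sigma trho tsigma A /\ eq_constraints u v w dd c A.
Proof.
move=> [dc0 dirs cstr].
have [j0 dcj0] : exists j0, dc 0 j0 != 0.
  apply/existsP; apply: contraNT dc0 => /existsPn dc_eq0.
  by apply/eqP/rowP => j; rewrite mxE; apply/eqP/negPn.
(* Coordinates are scaled too: coordinate [j0] of [A k] is then strictly monotone. *)
pose G (i : ('I_n + 'I_n) + 'I_d) := match i with
  | inl (inl i) => r i | inl (inr i) => s i | inr j => delta_mx 0 j end.
have [l l_gt0 small] :=
  exists_small_scale (fun i => qdot (G i) dc) (fun i => qdot (G i) dinf).
pose A k := a - (l * harmonic k) *: dc + k%:R *: dinf.
have qdotA g : (fun k => qdot g (A k)) = traj l (qdot g a) (qdot g dc) (qdot g dinf).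
  by apply/funext => k; rewrite qdotDr qdotBr !qdotZr.
exists A; split; first split.
- move=> k1 k2 /(congr1 (qdot (G (inr j0)))).
  move: (qdotA (G (inr j0))) => /funeqP qA; rewrite !qA.
  by apply: (traj_inj l_gt0 (small (inr j0))); rewrite qdot_delta.
- move=> i; rewrite !qdotA; have [dir_r dir_s] := dirs i; split.
  + exact (traj_behaves l_gt0 (small (inl (inl i))) (wf_rho i) dir_r).
  + exact (traj_behaves l_gt0 (small (inl (inr i))) (wf_sigma i) dir_s).
- move=> j k1 k2 _; move: (qdotA (u j)) (qdotA (v j)) => /funeqP -> /funeqP ->.
  have [udc [udinf [vdc [vdinf uva]]]] := cstr j.
  by move: uva; rewrite qdotBl /traj udc udinf vdc vdinf; lra.
Qed.

End Characterization.

Theorem mainTheorem13 (R : realType) (d e n m : nat)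
  (r s : 'I_n -> 'rV[rat]_d) (t : 'I_n -> 'rV[rat]_e) (h : 'I_n -> rat)
  (u v : 'I_m -> 'rV[rat]_d) (w : 'I_m -> 'rV[rat]_e) (dd : 'I_m -> rat)
  (c : 'rV[R]_e)
  (rho sigma : 'I_n -> \bar R) (trho tsigma : 'I_n -> ptype)
  (wf_rho : profile_wf rho trho) (wf_sigma : profile_wf sigma tsigma) :
  (exists a : nat -> 'rV[R]_d,
      compatible r s rho sigma trho tsigma a /\ eq_constraints u v w dd c a)
  <->
  (exists a dc dinf : 'rV[R]_d, dc != 0 /\
     (forall i : 'I_n,
       (* (1) *)
       ((trho i = TNeg \/ trho i = TPos) ->
          (qdot (r i) a)%:E = rho i /\ qdot (r i) dinf = 0) /\
       ((tsigma i = TNeg \/ tsigma i = TPos) ->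
          (qdot (s i) a)%:E = sigma i /\ qdot (s i) dinf = 0) /\
       (* (2) *)
       (trho i = TZero ->
          (qdot (r i) a)%:E = rho i /\ qdot (r i) dc = 0 /\ qdot (r i) dinf = 0) /\
       (tsigma i = TZero ->
          (qdot (s i) a)%:E = sigma i /\ qdot (s i) dc = 0 /\ qdot (s i) dinf = 0) /\
       (* (3) *)
       (trho i = TPos -> 0 < qdot (r i) dc) /\
       (trho i = TNeg -> qdot (r i) dc < 0) /\
       (tsigma i = TPos -> 0 < qdot (s i) dc) /\
       (tsigma i = TNeg -> qdot (s i) dc < 0) /\
       (* (4) *)
       (trho i = TPosOmega -> 0 < qdot (r i) dinf) /\
       (trho i = TNegOmega -> qdot (r i) dinf < 0) /\
       (tsigma i = TPosOmega -> 0 < qdot (s i) dinf) /\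
       (tsigma i = TNegOmega -> qdot (s i) dinf < 0)) /\
     (forall j : 'I_m,
       (* (5) *)
       qdot (u j) dc = 0 /\ qdot (u j) dinf = 0 /\
       qdot (v j) dc = 0 /\ qdot (v j) dinf = 0 /\
       qdot (u j - v j) a = qdot (w j) c + ratr (dd j))).
Proof.
split=> [[A [A_compat A_eq]] | [a [dc [dinf [dc0 [dirs cstr]]]]]].
- have [a [dc [dinf [dc0 dirs cstr]]]] := certificate_of_sequence A_compat A_eq.
  by exists a, dc, dinf; split=> //; split=> // i; apply/profile_cond2P/dirs.
- apply: (sequence_of_certificate wf_rho wf_sigma (a := a) (dc := dc) (dinf := dinf)).
  by split=> // i; apply/profile_cond2P/dirs.
Qed.
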